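(* Let $G_0$ be the group of homeomorphisms of $\mathbb{R}$ generated by $a,b,c$ as in the context. The assignment $a\mapsto(1,0,0)$, $b\mapsto(0,1,0)$, $c\mapsto(0,0,1)$ extends to a surjective homomorphism $\pi:G_0\to\mathbb{Z}^3$ whose kernel is exactly the commutator subgroup $G_0'=[G_0,G_0]$.
   Context: The three generating homeomorphisms of $\mathbb{R}$ are as follows. - $a(t)=t+1$. - $b(t)=t$ for $t\le 0$, $b(t)=t/(1-t)$ for $0\le t\le 1/2$, $b(t)=(3t-1)/t$ for $1/2\le t\le 1$, $b(t)=t+1$ for $t\ge 1$. - $c(t)=2t/(t+1)$ for $0\le t\le 1$, and $c(t)=t$ otherwise. (In binary-sequence notation these are the maps $x$, $x_{\mathtt1}$, $y_{\mathtt{10}}$.) *)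

From Stdlib Require Import Reals ZArith.
Open Scope R_scope.

Definition ga (t : R) : R := t + 1.

Definition gb (t : R) : R :=
  if Rle_dec t 0 then t
  else if Rle_dec t (1/2) then t / (1 - t)
  else if Rle_dec t 1 then (3 * t - 1) / t
  else t + 1.

Definition gc (t : R) : R :=
  if Rle_dec 0 t then (if Rle_dec t 1 then 2 * t / (t + 1) else t) else t.

Definition gcomp (f g : R -> R) : R -> R := fun x => f (g x).

Definition inverse_of (f g : R -> R) : Prop :=
  (forall x, g (f x) = x) /\ (forall x, f (g x) = x).

Inductive InG0 : (R -> R) -> Prop :=
| G0_id : InG0 (fun x => x)
| G0_a : InG0 ga
| G0_b : InG0 gb
| G0_c : InG0 gc
| G0_comp : forall f g, InG0 f -> InG0 g -> InG0 (gcomp f g)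
| G0_inv : forall f g, InG0 f -> inverse_of f g -> InG0 g.

Inductive InComm : (R -> R) -> Prop :=
| Comm_id : InComm (fun x => x)
| Comm_gen : forall f g f' g', InG0 f -> InG0 g ->
    inverse_of f f' -> inverse_of g g' ->
    InComm (gcomp f' (gcomp g' (gcomp f g)))
| Comm_comp : forall f g, InComm f -> InComm g -> InComm (gcomp f g)
| Comm_inv : forall f g, InComm f -> inverse_of f g -> InComm g.

Definition Z3 : Type := (Z * Z * Z)%type.
Definition z3add (u v : Z3) : Z3 :=
  let '(u1, u2, u3) := u in let '(v1, v2, v3) := v in
  ((u1 + v1)%Z, (u2 + v2)%Z, (u3 + v3)%Z).
Definition z3zero : Z3 := (0%Z, 0%Z, 0%Z).

From Stdlib Require Import Reals ZArith Lra Lia List Permutation FinFun.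
From Stdlib Require Import Classical ClassicalEpsilon FunctionalExtensionality.
Open Scope R_scope.

(* Every element of G_0 is a piecewise projective homeomorphism that is a translation
   t |-> t + d near -oo and near +oo and has finitely many breakpoints.  By the chain rule
   for one-sided derivatives, the two translation amounts d_-, d_+ and the sum over all
   points of ln (f'(x+) / f'(x-)) are additive under composition.  On a, b, c they take the
   values (1, 1, 0), (0, 1, 0) and (0, 0, 2 ln 2), so (d_-, d_+ - d_-, sum / (2 ln 2)) sends
   a, b, c to the standard basis of Z^3.  Since a, b, c generate G_0, every element is
   congruent modulo the commutator subgroup to some a^i b^j c^k, whose image is (i, j, k);
   hence the kernel is exactly the commutator subgroup. *)

(** * Möbius transformations *)

Record mob := Mob { ma : R; mb : R; mc : R; md : R }.

Definition mden (M : mob) (t : R) : R := mc M * t + md M.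
Definition mev (M : mob) (t : R) : R := (ma M * t + mb M) / mden M t.
Definition mdet (M : mob) : R := ma M * md M - mb M * mc M.
Definition mderiv (M : mob) (t : R) : R := mdet M / (mden M t * mden M t).

Definition mmul (N M : mob) : mob :=
  Mob (ma N * ma M + mb N * mc M) (ma N * mb M + mb N * md M)
      (mc N * ma M + md N * mc M) (mc N * mb M + md N * md M).

Definition minv (M : mob) : mob := Mob (md M) (- mb M) (- mc M) (ma M).
Definition mreflect (M : mob) : mob := Mob (ma M) (- mb M) (- mc M) (md M).

Definition mid : mob := Mob 1 0 0 1.
Definition mtrans : mob := Mob 1 1 0 1.

Lemma mev_mid t : mev mid t = t.
Proof. unfold mev, mden; simpl; field. Qed.

Lemma mev_mtrans t : mev mtrans t = t + 1.
Proof. unfold mev, mden; simpl; field. Qed.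

Lemma mden_mul N M t : mden M t <> 0 ->
  mden (mmul N M) t = mden N (mev M t) * mden M t.
Proof. intros HM; unfold mev, mmul, mden in *; simpl; field; exact HM. Qed.

Lemma mev_mul N M t : mden M t <> 0 -> mden N (mev M t) <> 0 ->
  mev (mmul N M) t = mev N (mev M t).
Proof.
  intros HM HN. unfold mev at 1; rewrite mden_mul by exact HM.
  unfold mev, mmul, mden in *; simpl in *. field. split; [exact HM|].
  intro E; apply HN. apply (Rmult_eq_reg_r (mc M * t + md M)); [|exact HM].
  rewrite Rmult_0_l, <- E. field; exact HM.
Qed.

Lemma mdet_mul N M : mdet (mmul N M) = mdet N * mdet M.
Proof. unfold mdet, mmul; simpl; ring. Qed.

Lemma mderiv_mul N M t : mden M t <> 0 -> mden N (mev M t) <> 0 ->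
  mderiv (mmul N M) t = mderiv N (mev M t) * mderiv M t.
Proof.
  intros HM HN. unfold mderiv. rewrite mden_mul, mdet_mul by exact HM.
  field; auto.
Qed.

Lemma mden_inv M t : mden M t <> 0 -> mden (minv M) (mev M t) = mdet M / mden M t.
Proof. intros HM; unfold mev, minv, mdet, mden in *; simpl; field; exact HM. Qed.

Lemma mev_inv M t : mden M t <> 0 -> mdet M <> 0 -> mev (minv M) (mev M t) = t.
Proof.
  intros HM Hdet. unfold mev at 1; rewrite mden_inv by exact HM.
  unfold mev, minv, mdet, mden in *; simpl in *; field; auto.
Qed.

Lemma mdet_inv M : mdet (minv M) = mdet M.
Proof. unfold mdet, minv; simpl; ring. Qed.

Lemma mderiv_inv M t : mden M t <> 0 -> mdet M <> 0 ->
  mderiv (minv M) (mev M t) = / mderiv M t.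
Proof.
  intros HM Hdet. unfold mderiv. rewrite mden_inv, mdet_inv by exact HM.
  field; auto.
Qed.

Lemma mdet_reflect M : mdet (mreflect M) = mdet M.
Proof. unfold mdet, mreflect; simpl; ring. Qed.

Lemma mderiv_reflect M t : mderiv (mreflect M) (- t) = mderiv M t.
Proof. unfold mderiv, mdet, mden, mreflect; simpl; f_equal; ring. Qed.

Lemma mderiv_pos M t : 0 < mdet M -> mden M t <> 0 -> 0 < mderiv M t.
Proof.
  intros Hdet HM. unfold mderiv. apply Rdiv_lt_0_compat; [exact Hdet|].
  destruct (Rtotal_order (mden M t) 0) as [H|[H|H]]; [nra|contradiction|nra].
Qed.

Lemma mev_sub M s t : mden M s <> 0 -> mden M t <> 0 ->
  (mev M t - mev M s) * (mden M t * mden M s) = mdet M * (t - s).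
Proof. intros Hs Ht; unfold mev, mdet, mden in *; field; auto. Qed.

Lemma mev_lt M s t : 0 < mdet M -> 0 < mden M s -> 0 < mden M t -> s < t ->
  mev M s < mev M t.
Proof.
  intros Hdet Hs Ht Hst.
  assert (E := mev_sub M s t ltac:(lra) ltac:(lra)).
  assert (0 < mden M t * mden M s) by nra.
  nra.
Qed.

(* Cross-multiplying the difference quotients at [x + h] gives, for [h = y - x]
   and [h = z - x], an identity affine in [h] whose constant term is the claim. *)
Lemma mderiv_unique M N x y z :
  y <> x -> z <> x -> y <> z ->
  mden M x <> 0 -> mden N x <> 0 -> mden M y <> 0 -> mden N y <> 0 ->
  mden M z <> 0 -> mden N z <> 0 ->
  mev M x = mev N x -> mev M y = mev N y -> mev M z = mev N z ->
  mderiv M x = mderiv N x.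
Proof.
  intros Hyx Hzx Hyz Mx Nx My Ny Mz Nz Ex Ey Ez.
  assert (cross : forall w, mden M w <> 0 -> mden N w <> 0 -> w <> x ->
    mev M w = mev N w ->
    mdet M * mden N x * (mden N x + mc N * (w - x))
    = mdet N * mden M x * (mden M x + mc M * (w - x))).
  { intros w Mw Nw Hw Ew.
    assert (EM := mev_sub M x w Mx Mw). assert (EN := mev_sub N x w Nx Nw).
    assert (K : (w - x) * (mdet M * mden N x * mden N w - mdet N * mden M x * mden M w)
              = (mdet M * (w - x)) * (mden N w * mden N x)
                - (mdet N * (w - x)) * (mden M w * mden M x)) by ring.
    rewrite <- EM, <- EN, Ex, Ew in K.
    assert (Z : (w - x) * (mdet M * mden N x * mden N w - mdet N * mden M x * mden M w) = 0)
      by (rewrite K; ring).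
    apply Rmult_integral in Z as [Z|Z]; [lra|].
    unfold mden in *; lra. }
  assert (Cy := cross y My Ny Hyx Ey). assert (Cz := cross z Mz Nz Hzx Ez).
  assert (Z : (y - z) * (mdet M * (mden N x * mden N x) - mdet N * (mden M x * mden M x)) = 0)
    by nra.
  apply Rmult_integral in Z as [Z|Z]; [lra|].
  unfold mderiv. field_simplify_eq; [lra | auto].
Qed.

(** * Increasing bijections of the line *)

Lemma strict_increasing_le f s t : strict_increasing f -> s <= t -> f s <= f t.
Proof. intros Hf Hst. destruct (Req_dec s t) as [->|]; [lra|]. left; apply Hf; lra. Qed.

Lemma strict_increasing_reg f s t : strict_increasing f -> f s < f t -> s < t.
Proof.
  intros Hf H. destruct (Rlt_le_dec s t) as [|Hts]; [assumption|].
  apply (strict_increasing_le f) in Hts; [lra | exact Hf].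
Qed.

Lemma strict_increasing_split (P : R -> Prop) f v s t : P v ->
  (forall s t, P s -> P t -> s < t <= v -> f s < f t) ->
  (forall s t, P s -> P t -> v <= s < t -> f s < f t) ->
  P s -> P t -> s < t -> f s < f t.
Proof.
  intros Pv Hl Hr Ps Pt Hst.
  destruct (Rle_lt_dec t v); [apply Hl; auto; lra|].
  destruct (Rle_lt_dec v s); [apply Hr; auto; lra|].
  apply Rlt_trans with (f v); [apply Hl | apply Hr]; auto; lra.
Qed.

Lemma inverse_of_sym f g : inverse_of f g -> inverse_of g f.
Proof. intros [H1 H2]; split; assumption. Qed.

Lemma inverse_of_strict_increasing f g :
  strict_increasing f -> inverse_of f g -> strict_increasing g.
Proof.
  intros Hf [_ Hfg] s t Hst. apply (strict_increasing_reg f); [exact Hf|].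
  rewrite !Hfg; exact Hst.
Qed.

Definition finv (f : R -> R) (y : R) : R := epsilon (inhabits 0) (fun x => f x = y).

Lemma inverse_of_finv f : strict_increasing f -> Surjective f -> inverse_of f (finv f).
Proof.
  intros Hinc Hsurj.
  assert (Hr : forall y, f (finv f y) = y) by
    (intros y; exact (epsilon_spec (inhabits 0) (fun x => f x = y) (Hsurj y))).
  split; [|exact Hr].
  intros x. destruct (Rtotal_order (finv f (f x)) x) as [H|[H|H]]; [|exact H|];
    apply Hinc in H; rewrite Hr in H; lra.
Qed.

Definition reflect (f : R -> R) : R -> R := fun t => - f (- t).

Lemma reflect_comp f g : reflect (gcomp f g) = gcomp (reflect f) (reflect g).
Proof.
  apply functional_extensionality; intros t; unfold reflect, gcomp; rewrite Ropp_involutive;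
    reflexivity.
Qed.

Lemma reflect_opp f x : reflect f (- x) = - f x.
Proof. unfold reflect; rewrite Ropp_involutive; reflexivity. Qed.

Lemma reflect_strict_increasing f : strict_increasing f -> strict_increasing (reflect f).
Proof. intros Hf s t Hst; unfold reflect; apply Ropp_lt_contravar, Hf; lra. Qed.

Lemma reflect_surjective f : Surjective f -> Surjective (reflect f).
Proof.
  intros Hf y. destruct (Hf (- y)) as [x Hx]. exists (- x).
  rewrite reflect_opp, Hx; apply Ropp_involutive.
Qed.

Lemma reflect_inverse_of f g : inverse_of f g -> inverse_of (reflect f) (reflect g).
Proof.
  intros [Hl Hr]; split; intros x; unfold reflect; rewrite Ropp_involutive;
    [rewrite Hl | rewrite Hr]; apply Ropp_involutive.
Qed.

(** * One-sided projective germs *)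

Definition mob_on (f : R -> R) (M : mob) (P : R -> Prop) : Prop :=
  forall t, P t -> 0 < mden M t /\ f t = mev M t.

Lemma mob_on_sub f M (P Q : R -> Prop) :
  (forall t, Q t -> P t) -> mob_on f M P -> mob_on f M Q.
Proof. intros HQP H t Ht; exact (H t (HQP t Ht)). Qed.

Lemma mob_on_incr f M (P : R -> Prop) : 0 < mdet M -> mob_on f M P ->
  forall s t, P s -> P t -> s < t -> f s < f t.
Proof.
  intros Hdet H s t Hs Ht Hst.
  destruct (H s Hs) as [Ds ->]; destruct (H t Ht) as [Dt ->].
  apply mev_lt; assumption.
Qed.

Lemma mob_on_reflect f M (P : R -> Prop) :
  mob_on f M P -> mob_on (reflect f) (mreflect M) (fun t => P (- t)).
Proof.
  intros H t Ht. destruct (H (- t) Ht) as [D E].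
  unfold reflect, mev, mden, mreflect in *; simpl in *.
  split; [lra|]. rewrite E; field; lra.
Qed.

Definition right_germ (f : R -> R) (x : R) (M : mob) : Prop :=
  0 < mdet M /\ exists e, 0 < e /\ mob_on f M (fun t => x <= t < x + e).

Lemma right_germ_at f x M : right_germ f x M -> 0 < mden M x /\ f x = mev M x.
Proof. intros [_ [e [He H]]]; apply H; lra. Qed.

Lemma right_germ_deriv_unique f x M N :
  right_germ f x M -> right_germ f x N -> mderiv M x = mderiv N x.
Proof.
  intros [_ [e1 [He1 H1]]] [_ [e2 [He2 H2]]].
  set (e := Rmin e1 e2).
  assert (He : 0 < e) by (apply Rmin_glb_lt; assumption).
  assert (Le1 := Rmin_l e1 e2). assert (Le2 := Rmin_r e1 e2). fold e in Le1, Le2.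
  destruct (H1 x) as [Mx Ex]; [lra|]. destruct (H2 x) as [Nx Fx]; [lra|].
  destruct (H1 (x + e / 2)) as [My Ey]; [lra|]. destruct (H2 (x + e / 2)) as [Ny Fy]; [lra|].
  destruct (H1 (x + e / 4)) as [Mz Ez]; [lra|]. destruct (H2 (x + e / 4)) as [Nz Fz]; [lra|].
  apply (mderiv_unique M N x (x + e / 2) (x + e / 4)); try lra; congruence.
Qed.

(* The junk value [mderiv mid x = 1] is taken where [f] has no right germ. *)
Definition rderiv (f : R -> R) (x : R) : R :=
  mderiv (epsilon (inhabits mid) (right_germ f x)) x.

Lemma rderiv_eq f x M : right_germ f x M -> rderiv f x = mderiv M x.
Proof.
  intros H. apply (right_germ_deriv_unique f x); [|exact H].
  apply (epsilon_spec (inhabits mid) (right_germ f x)). exists M; exact H.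
Qed.

Lemma rderiv_pos f x M : right_germ f x M -> 0 < rderiv f x.
Proof.
  intros H. rewrite (rderiv_eq f x M H). destruct (right_germ_at f x M H).
  apply mderiv_pos; [apply H | lra].
Qed.

Lemma right_germ_comp f g x M N : strict_increasing g -> Surjective g ->
  right_germ g x M -> right_germ f (g x) N -> right_germ (gcomp f g) x (mmul N M).
Proof.
  intros Hinc Hsurj [DM [e1 [He1 H1]]] [DN [e2 [He2 H2]]].
  split; [rewrite mdet_mul; nra|].
  destruct (Hsurj (g x + e2)) as [t0 Ht0].
  assert (Hx : x < t0) by (apply (strict_increasing_reg g); [exact Hinc | lra]).
  exists (Rmin e1 (t0 - x)). split; [apply Rmin_glb_lt; lra|].
  intros t Ht. assert (Le1 := Rmin_l e1 (t0 - x)). assert (Le2 := Rmin_r e1 (t0 - x)).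
  destruct (H1 t) as [Dt Et]; [lra|].
  assert (g x <= g t) by (apply strict_increasing_le; [exact Hinc | lra]).
  assert (g t < g t0) by (apply Hinc; lra).
  destruct (H2 (g t)) as [Dgt Egt]; [lra|].
  rewrite Et in Dgt, Egt. unfold gcomp. rewrite Et, Egt.
  rewrite mden_mul, mev_mul by lra. split; [nra | reflexivity].
Qed.

Lemma rderiv_comp f g x M N : strict_increasing g -> Surjective g ->
  right_germ g x M -> right_germ f (g x) N ->
  rderiv (gcomp f g) x = rderiv f (g x) * rderiv g x.
Proof.
  intros Hinc Hsurj HM HN.
  rewrite (rderiv_eq _ _ _ (right_germ_comp f g x M N Hinc Hsurj HM HN)).
  rewrite (rderiv_eq _ _ _ HM), (rderiv_eq _ _ _ HN).
  destruct (right_germ_at g x M HM) as [Dx Ex]. destruct (right_germ_at f (g x) N HN) as [Dg _].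
  rewrite Ex in Dg |- *. apply mderiv_mul; lra.
Qed.

Lemma right_germ_inv f g y M : strict_increasing f -> inverse_of f g ->
  right_germ f (g y) M -> right_germ g y (minv M).
Proof.
  intros Hf Hinv [DM [e [He H]]]. assert (Hg := inverse_of_strict_increasing f g Hf Hinv).
  destruct Hinv as [Hgf Hfg].
  split; [rewrite mdet_inv; exact DM|].
  assert (Hy : y < f (g y + e / 2)) by (rewrite <- (Hfg y) at 1; apply Hf; lra).
  exists (f (g y + e / 2) - y). split; [lra|].
  intros s Hs.
  assert (g y <= g s) by (apply strict_increasing_le; [exact Hg | lra]).
  assert (g s < g y + e / 2).
  { rewrite <- (Hgf (g y + e / 2)). apply Hg; lra. }
  destruct (H (g s)) as [Ds Es]; [lra|]. rewrite Hfg in Es.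
  rewrite Es at 1 3. rewrite mden_inv, mev_inv by lra.
  split; [apply Rdiv_lt_0_compat; lra | reflexivity].
Qed.

Lemma rderiv_inv f g y M : strict_increasing f -> inverse_of f g ->
  right_germ f (g y) M -> rderiv g y = / rderiv f (g y).
Proof.
  intros Hf Hinv HM.
  rewrite (rderiv_eq _ _ _ (right_germ_inv f g y M Hf Hinv HM)), (rderiv_eq _ _ _ HM).
  destruct (right_germ_at f (g y) M HM) as [D E]. rewrite (proj2 Hinv) in E.
  rewrite E at 1. apply mderiv_inv; [lra | destruct HM; lra].
Qed.

(** * Finitely supported sums *)

Definition fin_support (G : R -> R) : Prop := exists L, forall x, G x <> 0 -> In x L.

Lemma fin_support_mono G H : (forall x, G x <> 0 -> H x <> 0) -> fin_support H -> fin_support G.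
Proof. intros HGH [L HL]; exists L; intros x Hx; apply HL, HGH, Hx. Qed.

Lemma fin_support_add G H : fin_support G -> fin_support H -> fin_support (fun x => G x + H x).
Proof.
  intros [L1 H1] [L2 H2]. exists (L1 ++ L2). intros x Hx. apply in_or_app.
  destruct (Req_dec (G x) 0) as [E|E]; [right; apply H2; lra | left; apply H1, E].
Qed.

Lemma fin_support_reindex G h h' :
  inverse_of h h' -> fin_support G -> fin_support (fun x => G (h x)).
Proof.
  intros [Hl _] [L HL]. exists (map h' L). intros x Hx.
  rewrite <- (Hl x). apply in_map, HL, Hx.
Qed.

Definition sumL (G : R -> R) (L : list R) : R := fold_right (fun x s => G x + s) 0 L.

Lemma sumL_perm G L1 L2 : Permutation L1 L2 -> sumL G L1 = sumL G L2.
Proof.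
  induction 1; simpl; [reflexivity | rewrite IHPermutation | ring | congruence]; reflexivity.
Qed.

Lemma sumL_map G h L : sumL G (map h L) = sumL (fun x => G (h x)) L.
Proof. induction L as [|x L IH]; simpl; [reflexivity | rewrite IH; reflexivity]. Qed.

Lemma sumL_ext G H L : (forall x, G x = H x) -> sumL G L = sumL H L.
Proof. intros E; induction L as [|x L IH]; simpl; [reflexivity | rewrite E, IH; reflexivity]. Qed.

Lemma sumL_add G H L : sumL (fun x => G x + H x) L = sumL G L + sumL H L.
Proof. induction L as [|x L IH]; simpl; [ring | rewrite IH; ring]. Qed.

Definition support_dec (G : R -> R) (x : R) : bool :=
  if Req_dec_T (G x) 0 then false else true.

Lemma sumL_support G L : sumL G L = sumL G (filter (support_dec G) L).
Proof.
  induction L as [|x L IH]; simpl; [reflexivity|].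
  unfold support_dec at 1.
  destruct (Req_dec_T (G x) 0) as [E|E]; simpl; rewrite IH; [rewrite E; ring | reflexivity].
Qed.

Lemma sumL_covers G L1 L2 : NoDup L1 -> NoDup L2 ->
  (forall x, G x <> 0 -> In x L1) -> (forall x, G x <> 0 -> In x L2) ->
  sumL G L1 = sumL G L2.
Proof.
  intros N1 N2 C1 C2. rewrite (sumL_support G L1), (sumL_support G L2).
  apply sumL_perm, NoDup_Permutation; try apply NoDup_filter; try assumption.
  intros x. rewrite !filter_In. unfold support_dec.
  destruct (Req_dec_T (G x) 0) as [E|E]; [split; intros [_ F]; discriminate|].
  split; intros _; split; auto.
Qed.

Definition finsum (G : R -> R) : R :=
  sumL G (epsilon (inhabits nil) (fun L => NoDup L /\ forall x, G x <> 0 -> In x L)).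

Lemma finsum_eq G L : NoDup L -> (forall x, G x <> 0 -> In x L) -> finsum G = sumL G L.
Proof.
  intros N C. unfold finsum.
  destruct (epsilon_spec (inhabits nil) (fun L => NoDup L /\ forall x, G x <> 0 -> In x L))
    as [N' C']; [exists L; split; assumption|].
  apply sumL_covers; assumption.
Qed.

Lemma fin_support_NoDup G : fin_support G ->
  exists L, NoDup L /\ forall x, G x <> 0 -> In x L.
Proof.
  intros [L HL]. exists (nodup Req_dec_T L). split; [apply NoDup_nodup|].
  intros x Hx. apply nodup_In, HL, Hx.
Qed.

Lemma finsum_zero G : (forall x, G x = 0) -> finsum G = 0.
Proof.
  intros H. rewrite (finsum_eq G nil); [reflexivity | apply NoDup_nil | intros x Hx;
    contradiction (Hx (H x))].
Qed.

Lemma finsum_add G H : fin_support G -> fin_support H ->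
  finsum (fun x => G x + H x) = finsum G + finsum H.
Proof.
  intros SG SH. destruct (fin_support_NoDup _ (fin_support_add G H SG SH)) as [L [N C]].
  destruct SG as [LG CG]; destruct SH as [LH CH].
  set (L' := nodup Req_dec_T (L ++ LG ++ LH)).
  assert (N' : NoDup L') by apply NoDup_nodup.
  assert (In' : forall x, In x L \/ In x LG \/ In x LH -> In x L').
  { intros x Hx. apply nodup_In. rewrite !in_app_iff. exact Hx. }
  rewrite (finsum_eq _ L'), (finsum_eq G L'), (finsum_eq H L'), sumL_add; auto.
Qed.

Lemma finsum_reindex G h h' : inverse_of h h' -> fin_support G ->
  finsum (fun x => G (h x)) = finsum G.
Proof.
  intros Hinv SG. destruct (fin_support_NoDup G SG) as [L [N C]].
  destruct Hinv as [Hl Hr].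
  rewrite (finsum_eq G L N C), (finsum_eq _ (map h' L)).
  - rewrite sumL_map. apply sumL_ext. intros x; rewrite Hr; reflexivity.
  - apply Injective_map_NoDup; [|exact N]. intros s t E.
    rewrite <- (Hr s), <- (Hr t), E; reflexivity.
  - intros x Hx. rewrite <- (Hl x). apply in_map, C, Hx.
Qed.

(** * Piecewise projective homeomorphisms *)

(* Left germs of [f] at [x] are handled as right germs of [reflect f] at [- x]. *)
Definition lderiv (f : R -> R) (x : R) : R := rderiv (reflect f) (- x).

Definition jump (f : R -> R) (x : R) : R := ln (rderiv f x / lderiv f x).

Record pp_homeo (f : R -> R) : Prop := {
  pp_strict : strict_increasing f;
  pp_surj : Surjective f;
  pp_right_germ : forall x, exists M, right_germ f x M;
  pp_left_germ : forall x, exists M, right_germ (reflect f) x M;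
  pp_jump_support : fin_support (jump f);
  pp_shift_minfty : exists d T, forall t, t <= T -> f t = t + d;
  pp_shift_pinfty : exists d T, forall t, T <= t -> f t = t + d }.

Lemma ln_div_mult a b c d : 0 < a -> 0 < b -> 0 < c -> 0 < d ->
  ln ((a * b) / (c * d)) = ln (a / c) + ln (b / d).
Proof.
  intros. replace ((a * b) / (c * d)) with ((a / c) * (b / d)) by (field; lra).
  apply ln_mult; apply Rdiv_lt_0_compat; assumption.
Qed.

Lemma ln_div_inv a b : 0 < a -> 0 < b -> ln (/ a / / b) = - ln (a / b).
Proof.
  intros. replace (/ a / / b) with (/ (a / b)) by (field; lra).
  apply ln_Rinv, Rdiv_lt_0_compat; assumption.
Qed.

Lemma shift_minfty_comp f g d1 d2 T1 T2 :
  (forall t, t <= T1 -> f t = t + d1) -> (forall t, t <= T2 -> g t = t + d2) ->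
  forall t, t <= Rmin T2 (T1 - d2) -> gcomp f g t = t + (d1 + d2).
Proof.
  intros E1 E2 t Ht. assert (Rmin T2 (T1 - d2) <= T2) by apply Rmin_l.
  assert (Rmin T2 (T1 - d2) <= T1 - d2) by apply Rmin_r.
  unfold gcomp. rewrite E2, E1 by lra. ring.
Qed.

Lemma shift_pinfty_comp f g d1 d2 T1 T2 :
  (forall t, T1 <= t -> f t = t + d1) -> (forall t, T2 <= t -> g t = t + d2) ->
  forall t, Rmax T2 (T1 - d2) <= t -> gcomp f g t = t + (d1 + d2).
Proof.
  intros E1 E2 t Ht. assert (T2 <= Rmax T2 (T1 - d2)) by apply Rmax_l.
  assert (T1 - d2 <= Rmax T2 (T1 - d2)) by apply Rmax_r.
  unfold gcomp. rewrite E2, E1 by lra. ring.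
Qed.

Section Composition.
Variables f g : R -> R.
Hypotheses (Hf : pp_homeo f) (Hg : pp_homeo g).

Lemma pp_rderiv_comp x : rderiv (gcomp f g) x = rderiv f (g x) * rderiv g x.
Proof.
  destruct (pp_right_germ g Hg x) as [M HM], (pp_right_germ f Hf (g x)) as [N HN].
  exact (rderiv_comp f g x M N (pp_strict g Hg) (pp_surj g Hg) HM HN).
Qed.

Lemma pp_lderiv_comp x : lderiv (gcomp f g) x = lderiv f (g x) * lderiv g x.
Proof.
  unfold lderiv. rewrite reflect_comp, <- reflect_opp.
  destruct (pp_left_germ g Hg (- x)) as [M HM].
  destruct (pp_left_germ f Hf (reflect g (- x))) as [N HN].
  exact (rderiv_comp _ _ _ M N (reflect_strict_increasing g (pp_strict g Hg))
           (reflect_surjective g (pp_surj g Hg)) HM HN).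
Qed.

Lemma jump_comp x : jump (gcomp f g) x = jump g x + jump f (g x).
Proof.
  unfold jump. rewrite pp_rderiv_comp, pp_lderiv_comp, Rplus_comm.
  destruct (pp_right_germ g Hg x) as [M1 H1], (pp_right_germ f Hf (g x)) as [M2 H2].
  destruct (pp_left_germ g Hg (- x)) as [M3 H3], (pp_left_germ f Hf (- g x)) as [M4 H4].
  apply ln_div_mult; unfold lderiv; eapply rderiv_pos; eassumption.
Qed.

Lemma pp_homeo_comp : pp_homeo (gcomp f g).
Proof.
  pose proof (pp_strict g Hg) as sg. pose proof (pp_surj g Hg) as ug.
  split.
  - intros s t Hst; apply (pp_strict f Hf), sg, Hst.
  - intros y. destruct (pp_surj f Hf y) as [x1 H1], (ug x1) as [x2 H2].
    exists x2; unfold gcomp; congruence.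
  - intros x. destruct (pp_right_germ g Hg x) as [M HM], (pp_right_germ f Hf (g x)) as [N HN].
    exists (mmul N M); exact (right_germ_comp f g x M N sg ug HM HN).
  - intros x. rewrite reflect_comp.
    destruct (pp_left_germ g Hg x) as [M HM], (pp_left_germ f Hf (reflect g x)) as [N HN].
    exists (mmul N M).
    exact (right_germ_comp _ _ x M N (reflect_strict_increasing g sg)
             (reflect_surjective g ug) HM HN).
  - apply (fin_support_mono _ (fun x => jump g x + jump f (g x))).
    + intros x; rewrite jump_comp; auto.
    + apply fin_support_add; [exact (pp_jump_support g Hg)|].
      apply (fin_support_reindex _ g (finv g)); [exact (inverse_of_finv g sg ug)|].
      exact (pp_jump_support f Hf).
  - destruct (pp_shift_minfty f Hf) as [d1 [T1 E1]], (pp_shift_minfty g Hg) as [d2 [T2 E2]].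
    exists (d1 + d2), (Rmin T2 (T1 - d2)). exact (shift_minfty_comp f g d1 d2 T1 T2 E1 E2).
  - destruct (pp_shift_pinfty f Hf) as [d1 [T1 E1]], (pp_shift_pinfty g Hg) as [d2 [T2 E2]].
    exists (d1 + d2), (Rmax T2 (T1 - d2)). exact (shift_pinfty_comp f g d1 d2 T1 T2 E1 E2).
Qed.

End Composition.

Section Inverse.
Variables f g : R -> R.
Hypotheses (Hf : pp_homeo f) (Hinv : inverse_of f g).

Lemma jump_inv y : jump g y = - jump f (g y).
Proof.
  pose proof (pp_strict f Hf) as sf.
  destruct (pp_right_germ f Hf (g y)) as [M HM], (pp_left_germ f Hf (- g y)) as [N HN].
  unfold jump, lderiv.
  rewrite (rderiv_inv f g y M sf Hinv HM).
  rewrite <- reflect_opp in HN.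
  rewrite (rderiv_inv _ _ (- y) N (reflect_strict_increasing f sf)
             (reflect_inverse_of f g Hinv) HN).
  rewrite reflect_opp.
  apply ln_div_inv; [eapply rderiv_pos; exact HM|].
  rewrite <- reflect_opp; eapply rderiv_pos; exact HN.
Qed.

Lemma pp_homeo_inv : pp_homeo g.
Proof.
  pose proof (pp_strict f Hf) as sf. pose proof Hinv as [Hgf Hfg].
  split.
  - exact (inverse_of_strict_increasing f g sf Hinv).
  - intros y. exists (f y). apply Hgf.
  - intros y. destruct (pp_right_germ f Hf (g y)) as [M HM].
    exists (minv M); exact (right_germ_inv f g y M sf Hinv HM).
  - intros y. destruct (pp_left_germ f Hf (reflect g y)) as [M HM].
    exists (minv M).
    exact (right_germ_inv _ _ _ M (reflect_strict_increasing f sf)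
             (reflect_inverse_of f g Hinv) HM).
  - apply (fin_support_mono _ (fun y => jump f (g y))).
    + intros y; rewrite jump_inv; lra.
    + exact (fin_support_reindex _ g f (inverse_of_sym f g Hinv) (pp_jump_support f Hf)).
  - destruct (pp_shift_minfty f Hf) as [d [T E]].
    exists (- d), (T + d). intros s Hs.
    assert (Es : f (s - d) = s) by (rewrite E by lra; ring).
    rewrite <- Es at 1; rewrite Hgf; ring.
  - destruct (pp_shift_pinfty f Hf) as [d [T E]].
    exists (- d), (T + d). intros s Hs.
    assert (Es : f (s - d) = s) by (rewrite E by lra; ring).
    rewrite <- Es at 1; rewrite Hgf; ring.
Qed.

End Inverse.

Definition pp_at (f : R -> R) (x r : R) : Prop :=
  exists M N, right_germ f x M /\ right_germ (reflect f) (- x) (mreflect N) /\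
    mderiv M x = r * mderiv N x.

Lemma pp_at_break f M N u v x r : 0 < mdet M -> 0 < mdet N -> u < x < v ->
  mob_on f N (fun t => u <= t <= x) -> mob_on f M (fun t => x <= t <= v) ->
  mderiv M x = r * mderiv N x -> pp_at f x r.
Proof.
  intros DM DN Hx HN HM Er. exists M, N. split; [|split; [|exact Er]].
  - split; [exact DM|]. exists (v - x). split; [lra|].
    eapply mob_on_sub; [|exact HM]. intros t Ht; cbv beta in *; lra.
  - split; [rewrite mdet_reflect; exact DN|]. exists (x - u). split; [lra|].
    eapply mob_on_sub; [|exact (mob_on_reflect f N _ HN)]. intros t Ht; cbv beta in *; lra.
Qed.

Lemma jump_of_pp_at f x r : pp_at f x r -> jump f x = ln r.
Proof.
  intros [M [N [HM [HN Er]]]].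
  assert (Pos := rderiv_pos _ _ _ HN). rewrite (rderiv_eq _ _ _ HN), mderiv_reflect in Pos.
  unfold jump, lderiv. rewrite (rderiv_eq _ _ _ HM), (rderiv_eq _ _ _ HN), mderiv_reflect, Er.
  f_equal; field; lra.
Qed.

Lemma pp_homeo_intro f L : strict_increasing f -> Surjective f ->
  (forall x, exists r, pp_at f x r /\ (~ In x L -> r = 1)) ->
  (exists d T, forall t, t <= T -> f t = t + d) ->
  (exists d T, forall t, T <= t -> f t = t + d) ->
  pp_homeo f.
Proof.
  intros Hinc Hsurj Hat Hm Hp. split; try assumption.
  - intros x. destruct (Hat x) as [r [[M [_ [HM _]]] _]]. exists M; exact HM.
  - intros x. destruct (Hat (- x)) as [r [[_ [N [_ [HN _]]]] _]].
    rewrite Ropp_involutive in HN. exists (mreflect N); exact HN.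
  - exists L. intros x Hx. apply NNPP; intros HL.
    destruct (Hat x) as [r [Hr E]]. apply Hx. rewrite (jump_of_pp_at f x r Hr), E by exact HL.
    apply ln_1.
Qed.

(** * The generators *)

Lemma div_between a b lo hi : 0 < b -> lo * b <= a <= hi * b -> lo <= a / b <= hi.
Proof. intros Hb [H1 H2]. assert (E : a / b * b = a) by (field; lra). split; nra. Qed.

Ltac piece H := eapply mob_on_sub; [|exact H]; intros ? ?; cbv beta in *; lra.
Ltac mob_det := unfold mdet; simpl; lra.
Ltac mob_num := unfold mderiv, mdet, mden; simpl; field.

Lemma pp_at_of_global_mob f M x : 0 < mdet M -> mob_on f M (fun _ => True) -> pp_at f x 1.
Proof.
  intros D H. apply (pp_at_break f M M (x - 1) (x + 1)); try lra; piece H.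
Qed.

Lemma id_mob_on : mob_on (fun t => t) mid (fun _ => True).
Proof. intros t _; rewrite mev_mid; unfold mden; simpl; split; [lra | reflexivity]. Qed.

Lemma pp_homeo_id : pp_homeo (fun t => t).
Proof.
  apply (pp_homeo_intro _ nil).
  - intros s t H; exact H.
  - intros y; exists y; reflexivity.
  - intros x. exists 1. split; [|auto].
    apply pp_at_of_global_mob with mid; [mob_det | exact id_mob_on].
  - exists 0, 0; intros; ring.
  - exists 0, 0; intros; ring.
Qed.

Lemma ga_mob_on : mob_on ga mtrans (fun _ => True).
Proof. intros t _; rewrite mev_mtrans; unfold mden; simpl; split; [lra | reflexivity]. Qed.

Lemma pp_homeo_ga : pp_homeo ga.
Proof.
  apply (pp_homeo_intro _ nil).
  - intros s t H; unfold ga; lra.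
  - intros y; exists (y - 1); unfold ga; ring.
  - intros x. exists 1. split; [|auto].
    apply pp_at_of_global_mob with mtrans; [mob_det | exact ga_mob_on].
  - exists 1, 0; intros; reflexivity.
  - exists 1, 0; intros; reflexivity.
Qed.

Definition mob_b1 : mob := Mob 1 0 (-1) 1.
Definition mob_b2 : mob := Mob 3 (-1) 1 0.
Definition mob_c : mob := Mob 2 0 1 1.

Lemma gb_mob_neg : mob_on gb mid (fun t => t <= 0).
Proof.
  intros t Ht. rewrite mev_mid. unfold mden, gb; simpl.
  destruct (Rle_dec t 0); split; lra.
Qed.

Lemma gb_mob_b1 : mob_on gb mob_b1 (fun t => 0 <= t <= 1/2).
Proof.
  intros t Ht. unfold mev, mden, gb; simpl. split; [lra|].
  destruct (Rle_dec t 0); [assert (t = 0) by lra; subst; field|].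
  destruct (Rle_dec t (1/2)); [field; lra | lra].
Qed.

Lemma gb_mob_b2 : mob_on gb mob_b2 (fun t => 1/2 <= t <= 1).
Proof.
  intros t Ht. unfold mev, mden, gb; simpl. split; [lra|].
  destruct (Rle_dec t 0); [lra|]. destruct (Rle_dec t (1/2)).
  - assert (t = 1/2) by lra; subst; field.
  - destruct (Rle_dec t 1); [field; lra | lra].
Qed.

Lemma gb_mob_pos : mob_on gb mtrans (fun t => 1 <= t).
Proof.
  intros t Ht. rewrite mev_mtrans. unfold mden, gb; simpl. split; [lra|].
  destruct (Rle_dec t 0); [lra|]. destruct (Rle_dec t (1/2)); [lra|].
  destruct (Rle_dec t 1); [assert (t = 1) by lra; subst; field | reflexivity].
Qed.

Lemma gb_strict : strict_increasing gb.
Proof.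
  intros s t Hst.
  apply (strict_increasing_split (fun _ => True) gb 0); auto; clear s t Hst; intros s t _ _ Hst.
  { apply (mob_on_incr gb mid (fun t => t <= 0)); [mob_det | exact gb_mob_neg | lra..]. }
  apply (strict_increasing_split (fun t => 0 <= t) gb (1/2)); try lra; clear s t Hst;
    intros s t Hs Ht Hst.
  { apply (mob_on_incr gb mob_b1 (fun t => 0 <= t <= 1/2)); [mob_det | exact gb_mob_b1 | lra..]. }
  apply (strict_increasing_split (fun t => 1/2 <= t) gb 1); try lra; clear s t Hs Ht Hst;
    intros s t Hs Ht Hst.
  { apply (mob_on_incr gb mob_b2 (fun t => 1/2 <= t <= 1)); [mob_det | exact gb_mob_b2 | lra..]. }
  apply (mob_on_incr gb mtrans (fun t => 1 <= t)); [mob_det | exact gb_mob_pos | lra..].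
Qed.

Lemma gb_surj : Surjective gb.
Proof.
  intros y. destruct (Rle_lt_dec y 0).
  { exists y. destruct (gb_mob_neg y ltac:(lra)) as [_ ->]. apply mev_mid. }
  destruct (Rle_lt_dec y 1).
  { exists (y / (1 + y)).
    assert (Hx : 0 <= y / (1 + y) <= 1/2) by (apply div_between; lra).
    destruct (gb_mob_b1 _ Hx) as [_ ->]. unfold mev, mden; simpl; field; lra. }
  destruct (Rle_lt_dec y 2).
  { exists (1 / (3 - y)).
    assert (Hx : 1/2 <= 1 / (3 - y) <= 1) by (apply div_between; lra).
    destruct (gb_mob_b2 _ Hx) as [_ ->]. unfold mev, mden; simpl; field; lra. }
  exists (y - 1). destruct (gb_mob_pos (y - 1) ltac:(lra)) as [_ ->]. rewrite mev_mtrans; ring.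
Qed.

(* [b] is C^1: at the breakpoints 0, 1/2, 1 both one-sided derivatives are 1, 4, 1. *)
Lemma gb_pp_at x : pp_at gb x 1.
Proof.
  destruct (Rtotal_order x 0) as [Hx|[->|Hx]].
  { apply (pp_at_break gb mid mid (x - 1) 0); try mob_det; try lra; piece gb_mob_neg. }
  { apply (pp_at_break gb mob_b1 mid (-1) (1/2)); try mob_det; try lra;
      [piece gb_mob_neg | piece gb_mob_b1 | mob_num]. }
  destruct (Rtotal_order x (1/2)) as [Hx'|[->|Hx']].
  { apply (pp_at_break gb mob_b1 mob_b1 0 (1/2)); try mob_det; try lra; piece gb_mob_b1. }
  { apply (pp_at_break gb mob_b2 mob_b1 0 1); try mob_det; try lra;
      [piece gb_mob_b1 | piece gb_mob_b2 | mob_num]. }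
  destruct (Rtotal_order x 1) as [Hx''|[->|Hx'']].
  { apply (pp_at_break gb mob_b2 mob_b2 (1/2) 1); try mob_det; try lra; piece gb_mob_b2. }
  { apply (pp_at_break gb mtrans mob_b2 (1/2) 2); try mob_det; try lra;
      [piece gb_mob_b2 | piece gb_mob_pos | mob_num]. }
  apply (pp_at_break gb mtrans mtrans 1 (x + 1)); try mob_det; try lra; piece gb_mob_pos.
Qed.

Lemma pp_homeo_gb : pp_homeo gb.
Proof.
  apply (pp_homeo_intro _ nil gb_strict gb_surj).
  - intros x. exists 1. split; [apply gb_pp_at | auto].
  - exists 0, 0. intros t Ht. destruct (gb_mob_neg t Ht) as [_ ->]. rewrite mev_mid; ring.
  - exists 1, 1. intros t Ht. destruct (gb_mob_pos t Ht) as [_ ->]. apply mev_mtrans.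
Qed.

Lemma gc_mob_neg : mob_on gc mid (fun t => t <= 0).
Proof.
  intros t Ht. rewrite mev_mid. unfold mden, gc; simpl. split; [lra|].
  destruct (Rle_dec 0 t); [|reflexivity].
  assert (t = 0) by lra; subst. destruct (Rle_dec 0 1); [field | lra].
Qed.

Lemma gc_mob_c : mob_on gc mob_c (fun t => 0 <= t <= 1).
Proof.
  intros t Ht. unfold mev, mden, gc; simpl. split; [lra|].
  destruct (Rle_dec 0 t); [|lra]. destruct (Rle_dec t 1); [field; lra | lra].
Qed.

Lemma gc_mob_pos : mob_on gc mid (fun t => 1 <= t).
Proof.
  intros t Ht. rewrite mev_mid. unfold mden, gc; simpl. split; [lra|].
  destruct (Rle_dec 0 t); [|lra].
  destruct (Rle_dec t 1); [assert (t = 1) by lra; subst; field | reflexivity].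
Qed.

Lemma gc_strict : strict_increasing gc.
Proof.
  intros s t Hst.
  apply (strict_increasing_split (fun _ => True) gc 0); auto; clear s t Hst; intros s t _ _ Hst.
  { apply (mob_on_incr gc mid (fun t => t <= 0)); [mob_det | exact gc_mob_neg | lra..]. }
  apply (strict_increasing_split (fun t => 0 <= t) gc 1); try lra; clear s t Hst;
    intros s t Hs Ht Hst.
  { apply (mob_on_incr gc mob_c (fun t => 0 <= t <= 1)); [mob_det | exact gc_mob_c | lra..]. }
  apply (mob_on_incr gc mid (fun t => 1 <= t)); [mob_det | exact gc_mob_pos | lra..].
Qed.

Lemma gc_surj : Surjective gc.
Proof.
  intros y. destruct (Rle_lt_dec y 0).
  { exists y. destruct (gc_mob_neg y ltac:(lra)) as [_ ->]. apply mev_mid. }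
  destruct (Rle_lt_dec y 1).
  { exists (y / (2 - y)).
    assert (Hx : 0 <= y / (2 - y) <= 1) by (apply div_between; lra).
    destruct (gc_mob_c _ Hx) as [_ ->]. unfold mev, mden; simpl; field; lra. }
  exists y. destruct (gc_mob_pos y ltac:(lra)) as [_ ->]. apply mev_mid.
Qed.

Lemma gc_pp_at_0 : pp_at gc 0 2.
Proof.
  apply (pp_at_break gc mob_c mid (-1) 1); try mob_det; try lra;
    [piece gc_mob_neg | piece gc_mob_c | mob_num].
Qed.

Lemma gc_pp_at_1 : pp_at gc 1 2.
Proof.
  apply (pp_at_break gc mid mob_c 0 2); try mob_det; try lra;
    [piece gc_mob_c | piece gc_mob_pos | mob_num].
Qed.

Lemma gc_pp_at_smooth x : x <> 0 -> x <> 1 -> pp_at gc x 1.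
Proof.
  intros H0 H1. destruct (Rle_lt_dec x 0).
  { apply (pp_at_break gc mid mid (x - 1) 0); try mob_det; try lra; piece gc_mob_neg. }
  destruct (Rle_lt_dec x 1).
  { apply (pp_at_break gc mob_c mob_c 0 1); try mob_det; try lra; piece gc_mob_c. }
  apply (pp_at_break gc mid mid 1 (x + 1)); try mob_det; try lra; piece gc_mob_pos.
Qed.

Lemma pp_homeo_gc : pp_homeo gc.
Proof.
  apply (pp_homeo_intro _ (0 :: 1 :: nil) gc_strict gc_surj).
  - intros x. destruct (Req_dec x 0) as [->|H0]; [exists 2; split; [exact gc_pp_at_0 | simpl;
      tauto]|].
    destruct (Req_dec x 1) as [->|H1]; [exists 2; split; [exact gc_pp_at_1 | simpl; tauto]|].
    exists 1; split; [exact (gc_pp_at_smooth x H0 H1) | auto].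
  - exists 0, 0. intros t Ht. destruct (gc_mob_neg t Ht) as [_ ->]. rewrite mev_mid; ring.
  - exists 0, 1. intros t Ht. destruct (gc_mob_pos t Ht) as [_ ->]. rewrite mev_mid; ring.
Qed.

Lemma pp_homeo_G0 f : InG0 f -> pp_homeo f.
Proof.
  induction 1.
  - exact pp_homeo_id.
  - exact pp_homeo_ga.
  - exact pp_homeo_gb.
  - exact pp_homeo_gc.
  - apply pp_homeo_comp; assumption.
  - apply (pp_homeo_inv f); assumption.
Qed.

(** * Homomorphisms on G_0 *)

Definition total_jump (f : R -> R) : R := finsum (jump f).

Lemma total_jump_comp f g : pp_homeo f -> pp_homeo g ->
  total_jump (gcomp f g) = total_jump f + total_jump g.
Proof.
  intros Hf Hg. unfold total_jump.
  assert (Hinv := inverse_of_finv g (pp_strict g Hg) (pp_surj g Hg)).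
  rewrite (functional_extensionality _ _ (jump_comp f g Hf Hg)).
  rewrite finsum_add, (finsum_reindex (jump f) g (finv g) Hinv (pp_jump_support f Hf)); [ring| |].
  - exact (pp_jump_support g Hg).
  - exact (fin_support_reindex _ g (finv g) Hinv (pp_jump_support f Hf)).
Qed.

Lemma total_jump_smooth f : (forall x, pp_at f x 1) -> total_jump f = 0.
Proof. intros H. apply finsum_zero. intros x. rewrite (jump_of_pp_at f x 1 (H x)). apply ln_1. Qed.

Lemma total_jump_gc : total_jump gc = 2 * ln 2.
Proof.
  unfold total_jump. rewrite (finsum_eq _ (0 :: 1 :: nil)).
  - simpl. rewrite (jump_of_pp_at _ _ _ gc_pp_at_0), (jump_of_pp_at _ _ _ gc_pp_at_1). ring.
  - repeat constructor; simpl; lra.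
  - intros x Hx. simpl. destruct (Req_dec x 0) as [->|H0]; [tauto|].
    destruct (Req_dec x 1) as [->|H1]; [tauto|].
    exfalso. apply Hx. rewrite (jump_of_pp_at _ _ _ (gc_pp_at_smooth x H0 H1)). apply ln_1.
Qed.

Definition shift_minfty (f : R -> R) : R :=
  epsilon (inhabits 0) (fun d => exists T, forall t, t <= T -> f t = t + d).

Definition shift_pinfty (f : R -> R) : R :=
  epsilon (inhabits 0) (fun d => exists T, forall t, T <= t -> f t = t + d).

Lemma shift_minfty_eq f d T : (forall t, t <= T -> f t = t + d) -> shift_minfty f = d.
Proof.
  intros H. unfold shift_minfty.
  destruct (epsilon_spec (inhabits 0) (fun d => exists T, forall t, t <= T -> f t = t + d))
    as [T' H']; [exists d, T; exact H|].
  assert (E1 := H (Rmin T T') (Rmin_l _ _)). assert (E2 := H' (Rmin T T') (Rmin_r _ _)). lra.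
Qed.

Lemma shift_pinfty_eq f d T : (forall t, T <= t -> f t = t + d) -> shift_pinfty f = d.
Proof.
  intros H. unfold shift_pinfty.
  destruct (epsilon_spec (inhabits 0) (fun d => exists T, forall t, T <= t -> f t = t + d))
    as [T' H']; [exists d, T; exact H|].
  assert (E1 := H (Rmax T T') (Rmax_l _ _)). assert (E2 := H' (Rmax T T') (Rmax_r _ _)). lra.
Qed.

Definition rhom (phi : (R -> R) -> R) : Prop :=
  forall f g, InG0 f -> InG0 g -> phi (gcomp f g) = phi f + phi g.

Lemma rhom_total_jump : rhom total_jump.
Proof. intros f g Hf Hg. apply total_jump_comp; apply pp_homeo_G0; assumption. Qed.

Lemma rhom_shift_minfty : rhom shift_minfty.
Proof.
  intros f g Hf Hg.
  destruct (pp_shift_minfty f (pp_homeo_G0 f Hf)) as [d1 [T1 E1]].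
  destruct (pp_shift_minfty g (pp_homeo_G0 g Hg)) as [d2 [T2 E2]].
  rewrite (shift_minfty_eq f d1 T1 E1), (shift_minfty_eq g d2 T2 E2).
  exact (shift_minfty_eq _ _ _ (shift_minfty_comp f g d1 d2 T1 T2 E1 E2)).
Qed.

Lemma rhom_shift_pinfty : rhom shift_pinfty.
Proof.
  intros f g Hf Hg.
  destruct (pp_shift_pinfty f (pp_homeo_G0 f Hf)) as [d1 [T1 E1]].
  destruct (pp_shift_pinfty g (pp_homeo_G0 g Hg)) as [d2 [T2 E2]].
  rewrite (shift_pinfty_eq f d1 T1 E1), (shift_pinfty_eq g d2 T2 E2).
  exact (shift_pinfty_eq _ _ _ (shift_pinfty_comp f g d1 d2 T1 T2 E1 E2)).
Qed.

Lemma rhom_sub phi psi : rhom phi -> rhom psi -> rhom (fun f => psi f - phi f).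
Proof. intros H1 H2 f g Hf Hg. rewrite H1, H2 by assumption. ring. Qed.

Lemma rhom_id phi : rhom phi -> phi (fun x => x) = 0.
Proof. intros H. assert (E := H _ _ G0_id G0_id). unfold gcomp in E. lra. Qed.

Lemma rhom_inv phi f g : rhom phi -> InG0 f -> inverse_of f g -> phi g = - phi f.
Proof.
  intros H Hf Hinv. assert (Hg : InG0 g) by exact (G0_inv f g Hf Hinv).
  assert (E : gcomp f g = fun x => x) by (apply functional_extensionality; apply Hinv).
  assert (E' := H f g Hf Hg). rewrite E, rhom_id in E' by exact H. lra.
Qed.

Lemma rhom_lattice phi c : rhom phi ->
  (exists k, phi ga = IZR k * c) -> (exists k, phi gb = IZR k * c) ->
  (exists k, phi gc = IZR k * c) ->
  forall f, InG0 f -> exists k, phi f = IZR k * c.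
Proof.
  intros H Ha Hb Hc f Hf. induction Hf as [| | | |f g Hf [k1 E1] Hg [k2 E2]|f g Hf [k E] Hinv];
    try assumption.
  - exists 0%Z. rewrite rhom_id by exact H. ring.
  - exists (k1 + k2)%Z. rewrite H, E1, E2, plus_IZR by assumption. ring.
  - exists (- k)%Z. rewrite (rhom_inv phi f g H Hf Hinv), E, opp_IZR. ring.
Qed.

Definition zquot (x c : R) : Z := epsilon (inhabits 0%Z) (fun k => x = IZR k * c).

Lemma zquot_spec x c : (exists k, x = IZR k * c) -> x = IZR (zquot x c) * c.
Proof. exact (epsilon_spec (inhabits 0%Z) (fun k => x = IZR k * c)). Qed.

Lemma zquot_eq x c k : c <> 0 -> x = IZR k * c -> zquot x c = k.
Proof.
  intros Hc E. apply eq_IZR, (Rmult_eq_reg_r c); [|exact Hc].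
  rewrite <- zquot_spec, <- E; [reflexivity | exists k; exact E].
Qed.

Definition zhom (q : (R -> R) -> Z) : Prop :=
  forall f g, InG0 f -> InG0 g -> q (gcomp f g) = (q f + q g)%Z.

Lemma zhom_zquot phi c : c <> 0 -> rhom phi ->
  (forall f, InG0 f -> exists k, phi f = IZR k * c) -> zhom (fun f => zquot (phi f) c).
Proof.
  intros Hc H Hlat f g Hf Hg. apply zquot_eq; [exact Hc|].
  rewrite H, plus_IZR, Rmult_plus_distr_r, <- !zquot_spec by auto; reflexivity.
Qed.

Lemma G0_finv f : InG0 f -> InG0 (finv f) /\ inverse_of f (finv f).
Proof.
  intros Hf. assert (Hp := pp_homeo_G0 f Hf).
  assert (Hinv := inverse_of_finv f (pp_strict f Hp) (pp_surj f Hp)).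
  split; [exact (G0_inv f _ Hf Hinv) | exact Hinv].
Qed.

Lemma zhom_id q : zhom q -> q (fun x => x) = 0%Z.
Proof.
  intros H. assert (E := H _ _ G0_id G0_id). unfold gcomp in E.
  apply (Z.add_reg_l (q (fun x => x))). rewrite Z.add_0_r. symmetry; exact E.
Qed.

Lemma zhom_inv q f g : zhom q -> InG0 f -> inverse_of f g -> q g = (- q f)%Z.
Proof.
  intros H Hf Hinv. assert (Hg : InG0 g) by exact (G0_inv f g Hf Hinv).
  assert (E : gcomp f g = fun x => x) by (apply functional_extensionality; apply Hinv).
  assert (E' := H f g Hf Hg). rewrite E, zhom_id in E' by exact H.
  apply Z.add_move_0_l. symmetry; exact E'.
Qed.

Lemma InComm_G0 f : InComm f -> InG0 f.
Proof.
  induction 1 as [|f g f' g' Hf Hg Hf' Hg'| |f g _ Hf Hinv].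
  - exact G0_id.
  - apply G0_comp; [exact (G0_inv f f' Hf Hf')|].
    apply G0_comp; [exact (G0_inv g g' Hg Hg')|].
    apply G0_comp; assumption.
  - apply G0_comp; assumption.
  - exact (G0_inv f g Hf Hinv).
Qed.

Lemma zhom_InComm q f : zhom q -> InComm f -> q f = 0%Z.
Proof.
  intros H. induction 1 as [|f g f' g' Hf Hg Hf' Hg'|f g Cf IHf Cg IHg|f g Hf IHf Hinv].
  - exact (zhom_id q H).
  - assert (G1 : InG0 f') by exact (G0_inv f f' Hf Hf').
    assert (G2 : InG0 g') by exact (G0_inv g g' Hg Hg').
    assert (G3 : InG0 (gcomp f g)) by (apply G0_comp; assumption).
    assert (G4 : InG0 (gcomp g' (gcomp f g))) by (apply G0_comp; assumption).
    rewrite (H f'), (H g'), (H f g) by assumption.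
    rewrite (zhom_inv q f f'), (zhom_inv q g g') by assumption. ring.
  - rewrite H by (apply InComm_G0; assumption). rewrite IHf, IHg. reflexivity.
  - rewrite (zhom_inv q f g H (InComm_G0 f Hf) Hinv), IHf. reflexivity.
Qed.

Definition abel_a (f : R -> R) : Z := zquot (shift_minfty f) 1.
Definition abel_b (f : R -> R) : Z := zquot (shift_pinfty f - shift_minfty f) 1.
Definition abel_c (f : R -> R) : Z := zquot (total_jump f) (2 * ln 2).
Definition abel (f : R -> R) : Z3 := (abel_a f, abel_b f, abel_c f).

Lemma ln2_pos : 0 < ln 2.
Proof. pose proof ln_lt_2; lra. Qed.

Lemma shift_minfty_ga : shift_minfty ga = 1.
Proof. apply (shift_minfty_eq _ _ 0). intros t _; reflexivity. Qed.

Lemma shift_pinfty_ga : shift_pinfty ga = 1.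
Proof. apply (shift_pinfty_eq _ _ 0). intros t _; reflexivity. Qed.

Lemma shift_minfty_gb : shift_minfty gb = 0.
Proof.
  apply (shift_minfty_eq _ _ 0). intros t Ht. destruct (gb_mob_neg t Ht) as [_ ->].
  rewrite mev_mid; ring.
Qed.

Lemma shift_pinfty_gb : shift_pinfty gb = 1.
Proof.
  apply (shift_pinfty_eq _ _ 1). intros t Ht. destruct (gb_mob_pos t Ht) as [_ ->].
  apply mev_mtrans.
Qed.

Lemma shift_minfty_gc : shift_minfty gc = 0.
Proof.
  apply (shift_minfty_eq _ _ 0). intros t Ht. destruct (gc_mob_neg t Ht) as [_ ->].
  rewrite mev_mid; ring.
Qed.

Lemma shift_pinfty_gc : shift_pinfty gc = 0.
Proof.
  apply (shift_pinfty_eq _ _ 1). intros t Ht. destruct (gc_mob_pos t Ht) as [_ ->].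
  rewrite mev_mid; ring.
Qed.

Lemma total_jump_ga : total_jump ga = 0.
Proof.
  apply total_jump_smooth; intros x.
  apply pp_at_of_global_mob with mtrans; [mob_det | exact ga_mob_on].
Qed.

Lemma total_jump_gb : total_jump gb = 0.
Proof. exact (total_jump_smooth gb gb_pp_at). Qed.

Lemma abel_eq f i j k : shift_minfty f = IZR i -> shift_pinfty f - shift_minfty f = IZR j ->
  total_jump f = IZR k * (2 * ln 2) -> abel f = (i, j, k).
Proof.
  intros E1 E2 E3. assert (L := ln2_pos). unfold abel, abel_a, abel_b, abel_c.
  rewrite (zquot_eq _ _ i), (zquot_eq _ _ j), (zquot_eq _ _ k); try lra; reflexivity.
Qed.

Lemma abel_ga : abel ga = (1%Z, 0%Z, 0%Z).
Proof.
  apply abel_eq; rewrite ?shift_minfty_ga, ?shift_pinfty_ga, ?total_jump_ga; simpl; ring.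
Qed.

Lemma abel_gb : abel gb = (0%Z, 1%Z, 0%Z).
Proof.
  apply abel_eq; rewrite ?shift_minfty_gb, ?shift_pinfty_gb, ?total_jump_gb; simpl; ring.
Qed.

Lemma abel_gc : abel gc = (0%Z, 0%Z, 1%Z).
Proof.
  apply abel_eq; rewrite ?shift_minfty_gc, ?shift_pinfty_gc, ?total_jump_gc; simpl; ring.
Qed.

Lemma zhom_abel_a : zhom abel_a.
Proof.
  apply zhom_zquot; [lra | exact rhom_shift_minfty|].
  apply rhom_lattice; [exact rhom_shift_minfty|..]; [exists 1%Z | exists 0%Z | exists 0%Z];
    rewrite ?shift_minfty_ga, ?shift_minfty_gb, ?shift_minfty_gc; simpl; ring.
Qed.

Lemma zhom_abel_b : zhom abel_b.
Proof.
  assert (H := rhom_sub _ _ rhom_shift_minfty rhom_shift_pinfty).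
  apply zhom_zquot; [lra | exact H|].
  apply rhom_lattice; [exact H|..]; [exists 0%Z | exists 1%Z | exists 0%Z];
    rewrite ?shift_minfty_ga, ?shift_minfty_gb, ?shift_minfty_gc,
      ?shift_pinfty_ga, ?shift_pinfty_gb, ?shift_pinfty_gc; simpl; ring.
Qed.

Lemma zhom_abel_c : zhom abel_c.
Proof.
  assert (L := ln2_pos).
  apply zhom_zquot; [lra | exact rhom_total_jump|].
  apply rhom_lattice; [exact rhom_total_jump|..]; [exists 0%Z | exists 0%Z | exists 1%Z];
    rewrite ?total_jump_ga, ?total_jump_gb, ?total_jump_gc; simpl; ring.
Qed.

Lemma abel_comp f g : InG0 f -> InG0 g -> abel (gcomp f g) = z3add (abel f) (abel g).
Proof.
  intros Hf Hg. unfold abel, z3add.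
  rewrite (zhom_abel_a f g Hf Hg), (zhom_abel_b f g Hf Hg), (zhom_abel_c f g Hf Hg).
  reflexivity.
Qed.

Lemma abel_id : abel (fun x => x) = z3zero.
Proof.
  unfold abel. rewrite (zhom_id _ zhom_abel_a), (zhom_id _ zhom_abel_b), (zhom_id _ zhom_abel_c).
  reflexivity.
Qed.

(** * Congruence modulo the commutator subgroup *)

Definition zpow (f : R -> R) (k : Z) : R -> R :=
  match k with
  | Z0 => fun x => x
  | Zpos p => fun x => Nat.iter (Pos.to_nat p) f x
  | Zneg p => fun x => Nat.iter (Pos.to_nat p) (finv f) x
  end.

Lemma G0_iter f n : InG0 f -> InG0 (fun x => Nat.iter n f x).
Proof.
  intros Hf. induction n as [|n IH]; [exact G0_id|].
  exact (G0_comp f _ Hf IH).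
Qed.

Lemma G0_zpow f k : InG0 f -> InG0 (zpow f k).
Proof.
  intros Hf. destruct k; simpl; [exact G0_id | apply G0_iter, Hf | apply G0_iter, G0_finv, Hf].
Qed.

Section Powers.
Variable f : R -> R.
Hypothesis Hf : InG0 f.

Lemma zpow_succ k : zpow f (k + 1)%Z = gcomp f (zpow f k).
Proof.
  destruct (proj2 (G0_finv f Hf)) as [_ Hr].
  apply functional_extensionality; intros x. unfold gcomp.
  destruct k as [|p|p].
  - reflexivity.
  - replace (Z.pos p + 1)%Z with (Z.pos (Pos.succ p)) by lia.
    simpl. rewrite Pos2Nat.inj_succ. reflexivity.
  - destruct (Pos.succ_pred_or p) as [->|E]; [simpl; rewrite Hr; reflexivity|].
    rewrite <- E. replace (Z.neg (Pos.succ (Pos.pred p)) + 1)%Z with (Z.neg (Pos.pred p)) by lia.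
    simpl. rewrite Pos2Nat.inj_succ. simpl. rewrite Hr. reflexivity.
Qed.

Lemma zpow_pred k : zpow f (k - 1)%Z = gcomp (finv f) (zpow f k).
Proof.
  destruct (proj2 (G0_finv f Hf)) as [Hl _].
  replace (zpow f k) with (zpow f ((k - 1) + 1)%Z) by (f_equal; lia).
  rewrite zpow_succ. apply functional_extensionality; intros x. unfold gcomp. rewrite Hl.
  reflexivity.
Qed.

Lemma zpow_add i j : zpow f (i + j)%Z = gcomp (zpow f i) (zpow f j).
Proof.
  induction i as [|i IH|i IH] using Z.peano_ind.
  - reflexivity.
  - replace (Z.succ i + j)%Z with ((i + j) + 1)%Z by lia. rewrite <- Z.add_1_r.
    rewrite !zpow_succ, IH. reflexivity.
  - replace (Z.pred i + j)%Z with ((i + j) - 1)%Z by lia. rewrite <- Z.sub_1_r.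
    rewrite !zpow_pred, IH. reflexivity.
Qed.

Lemma zhom_zpow q k : zhom q -> q (zpow f k) = (k * q f)%Z.
Proof.
  intros H. destruct (G0_finv f Hf) as [Hfinv Hinv].
  induction k as [|k IH|k IH] using Z.peano_ind.
  - exact (zhom_id q H).
  - rewrite <- Z.add_1_r, zpow_succ, H, IH by (try apply G0_zpow; assumption). ring.
  - rewrite <- Z.sub_1_r, zpow_pred, H, IH, (zhom_inv q f (finv f)) by (try apply G0_zpow;
      assumption).
    ring.
Qed.

End Powers.

Definition word (v : Z3) : R -> R :=
  let '(i, j, k) := v in gcomp (zpow ga i) (gcomp (zpow gb j) (zpow gc k)).

Lemma G0_word v : InG0 (word v).
Proof.
  destruct v as [[i j] k]; simpl.
  apply G0_comp; [|apply G0_comp]; apply G0_zpow; constructor.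
Qed.

Lemma zhom_word q i j k : zhom q ->
  q (word (i, j, k)) = (i * q ga + j * q gb + k * q gc)%Z.
Proof.
  intros H. simpl.
  assert (Ga := G0_zpow ga i G0_a). assert (Gb := G0_zpow gb j G0_b).
  assert (Gc := G0_zpow gc k G0_c).
  assert (Gbc := G0_comp _ _ Gb Gc).
  rewrite H, H, !zhom_zpow by (assumption || constructor). ring.
Qed.

Lemma abel_word v : abel (word v) = v.
Proof.
  destruct v as [[i j] k].
  assert (Ea := abel_ga). assert (Eb := abel_gb). assert (Ec := abel_gc).
  unfold abel in *. injection Ea as Ea1 Ea2 Ea3. injection Eb as Eb1 Eb2 Eb3.
  injection Ec as Ec1 Ec2 Ec3.
  rewrite !zhom_word by (apply zhom_abel_a || apply zhom_abel_b || apply zhom_abel_c).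
  f_equal; [f_equal|]; lia.
Qed.

Definition comm_cong (f g : R -> R) : Prop := exists h, InComm h /\ f = gcomp g h.

Lemma comm_cong_refl f : comm_cong f f.
Proof. exists (fun x => x); split; [exact Comm_id | reflexivity]. Qed.

Lemma comm_cong_trans f g k : comm_cong f g -> comm_cong g k -> comm_cong f k.
Proof.
  intros [h1 [C1 ->]] [h2 [C2 ->]]. exists (gcomp h2 h1).
  split; [exact (Comm_comp _ _ C2 C1) | reflexivity].
Qed.

Lemma comm_cong_sym f g : comm_cong f g -> comm_cong g f.
Proof.
  intros [h [C ->]]. destruct (G0_finv h (InComm_G0 h C)) as [_ Hinv].
  exists (finv h). split; [exact (Comm_inv h _ C Hinv)|].
  apply functional_extensionality; intros x. unfold gcomp. rewrite (proj2 Hinv). reflexivity.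
Qed.

Lemma comm_cong_compl k f g : comm_cong f g -> comm_cong (gcomp k f) (gcomp k g).
Proof. intros [h [C ->]]. exists h; split; [exact C | reflexivity]. Qed.

(* Normality of [InComm]: [h k = k (h [h, k])] with [[h, k] = h^-1 k^-1 h k]. *)
Lemma comm_cong_compr k f g : InG0 k -> comm_cong f g -> comm_cong (gcomp f k) (gcomp g k).
Proof.
  intros Hk [h [C ->]]. assert (Hh := InComm_G0 h C).
  destruct (G0_finv h Hh) as [_ Ih]. destruct (G0_finv k Hk) as [_ Ik].
  exists (gcomp h (gcomp (finv h) (gcomp (finv k) (gcomp h k)))). split.
  - apply Comm_comp; [exact C|]. exact (Comm_gen h k _ _ Hh Hk Ih Ik).
  - apply functional_extensionality; intros t. unfold gcomp. rewrite (proj2 Ih), (proj2 Ik).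
    reflexivity.
Qed.

Lemma comm_cong_swap f g : InG0 f -> InG0 g -> comm_cong (gcomp f g) (gcomp g f).
Proof.
  intros Hf Hg. destruct (G0_finv f Hf) as [_ If]. destruct (G0_finv g Hg) as [_ Ig].
  exists (gcomp (finv f) (gcomp (finv g) (gcomp f g))). split.
  - exact (Comm_gen f g _ _ Hf Hg If Ig).
  - apply functional_extensionality; intros t. unfold gcomp. rewrite (proj2 If), (proj2 Ig).
    reflexivity.
Qed.

Lemma comm_cong_comp f1 f2 g1 g2 : InG0 g2 -> comm_cong f1 f2 -> comm_cong g1 g2 ->
  comm_cong (gcomp f1 g1) (gcomp f2 g2).
Proof.
  intros Hg2 Hf Hg. apply comm_cong_trans with (gcomp f1 g2);
    [apply comm_cong_compl, Hg | apply comm_cong_compr; assumption].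
Qed.

Lemma comm_cong_swap_mid x p q z : InG0 p -> InG0 q -> InG0 z ->
  comm_cong (gcomp x (gcomp (gcomp p q) z)) (gcomp x (gcomp (gcomp q p) z)).
Proof. intros Hp Hq Hz. apply comm_cong_compl, comm_cong_compr, comm_cong_swap; assumption. Qed.

Lemma word_add u v : comm_cong (gcomp (word u) (word v)) (word (z3add u v)).
Proof.
  destruct u as [[i j] k], v as [[i' j'] k']. simpl.
  rewrite !zpow_add by constructor.
  assert (GA' := G0_zpow ga i' G0_a). assert (GB := G0_zpow gb j G0_b).
  assert (GB' := G0_zpow gb j' G0_b). assert (GC := G0_zpow gc k G0_c).
  assert (GC' := G0_zpow gc k' G0_c).
  set (A := zpow ga i); set (A' := zpow ga i'); set (B := zpow gb j); set (B' := zpow gb j');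
    set (C := zpow gc k); set (C' := zpow gc k').
  apply comm_cong_trans with (gcomp A (gcomp (gcomp A' (gcomp B C)) (gcomp B' C'))).
  - exact (comm_cong_swap_mid A (gcomp B C) A' (gcomp B' C')
             (G0_comp _ _ GB GC) GA' (G0_comp _ _ GB' GC')).
  - exact (comm_cong_swap_mid (gcomp A (gcomp A' B)) C B' C' GC GB' GC').
Qed.

Lemma comm_cong_word f : InG0 f -> comm_cong f (word (abel f)).
Proof.
  induction 1 as [| | | |f g Hf IHf Hg IHg|f g Hf IHf Hinv].
  - rewrite abel_id; exact (comm_cong_refl _).
  - rewrite abel_ga; exact (comm_cong_refl _).
  - rewrite abel_gb; exact (comm_cong_refl _).
  - rewrite abel_gc; exact (comm_cong_refl _).
  - rewrite abel_comp by assumption.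
    apply comm_cong_trans with (gcomp (word (abel f)) (word (abel g)));
      [apply comm_cong_comp; [apply G0_word | assumption..] | apply word_add].
  - assert (Hg : InG0 g) by exact (G0_inv f g Hf Hinv).
    assert (E : z3add (abel f) (abel g) = z3zero).
    { rewrite <- abel_comp, <- abel_id by assumption. f_equal.
      apply functional_extensionality; apply Hinv. }
    assert (Id : gcomp g f = fun x => x) by (apply functional_extensionality; apply Hinv).
    (* g = g (word 0) ~ g (word (abel f)) (word (abel g)) ~ g f (word (abel g)) = word (abel g) *)
    apply comm_cong_trans with (gcomp g (gcomp (word (abel f)) (word (abel g)))).
    + assert (K := comm_cong_compl g _ _ (word_add (abel f) (abel g))).
      rewrite E in K. exact (comm_cong_sym _ _ K).
    + apply comm_cong_trans with (gcomp (gcomp g f) (word (abel g))).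
      * exact (comm_cong_compr _ _ _ (G0_word _) (comm_cong_compl g _ _ (comm_cong_sym _ _ IHf))).
      * rewrite Id. exact (comm_cong_refl _).
Qed.

Theorem mainTheorem3 :
  exists pi : (R -> R) -> Z3,
    pi ga = (1%Z, 0%Z, 0%Z) /\ pi gb = (0%Z, 1%Z, 0%Z) /\ pi gc = (0%Z, 0%Z, 1%Z) /\
    (forall f g, InG0 f -> InG0 g -> pi (gcomp f g) = z3add (pi f) (pi g)) /\
    (forall v : Z3, exists f, InG0 f /\ pi f = v) /\
    (forall f, InG0 f -> (pi f = z3zero <-> InComm f)).
Proof.
  exists abel.
  split; [exact abel_ga|]. split; [exact abel_gb|]. split; [exact abel_gc|].
  split; [exact abel_comp|]. split.
  - intros v. exists (word v). split; [apply G0_word | apply abel_word].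
  - intros f Hf. split.
    + intros E. destruct (comm_cong_word f Hf) as [h [C Ef]].
      rewrite E in Ef. rewrite Ef. exact C.
    + intros C. unfold abel.
      rewrite (zhom_InComm _ f zhom_abel_a C), (zhom_InComm _ f zhom_abel_b C),
        (zhom_InComm _ f zhom_abel_c C).
      reflexivity.
Qed.
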